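(* There is an absolute constant $C$ such that the following holds. Let $H=(V,E)$ be a connected contextuality scenario all of whose edges are binary, i.e. $|e|=2$ for all $e\in E$. Then $H$ has a $2$-partite conditional interpretation as a game of size $O(|V|)$: there exist hypergraphs $B_1,B_2$ with pairwise disjoint edges covering their vertex sets, and a rule $r$ on $B_1\otimes B_2$, such that the game $(B_1\otimes B_2)_r$ has at most $C|V|$ vertices and $H$ is a conditional contextuality scenario of $(B_1\otimes B_2)_r$.
   Context: A contextuality scenario is a hypergraph $H=(V,E)$ (finite $V$, $E$ a set of subsets of $V$) with $V=\bigcup_{e\in E}e$; its size is $|V|$. A probabilistic model on $H$ is a function $p:V\to[0,1]$ with $\sum_{v\in e}p(v)=1$ for all $e\in E$; $\mathcal{G}(H)$ denotes the set of such models. For $W\subseteq V$, the induced sub-hypergraph is $H_W=(W,\{e\cap W:e\in E\})$. Conditional contextuality: given hypergraphs $H=(V,E)$ and $H'=(V',E')$, $H'$ is a conditional contextuality scenario of $H$ if there is an injection $\phi:V'\to V$ such that (i) for all $p\in\mathcal{G}(H)$, $p\circ\phi\in\mathcal{G}(H')$, and (ii) for all $p'\in\mathcal{G}(H')$ there exists $p\in\mathcal{G}(H)$ with $p\circ\phi=p'$. Foulis–Randall product: for hypergraphs $H_A=(V_A,E_A)$, $H_B=(V_B,E_B)$, let $E_{A\to B}=\{\bigcup_{a\in e_A}(\{a\}\times f(a)) : e_A\in E_A,\ f:e_A\to E_B\}$ and $E_{A\gets B}=\{\bigcup_{b\in e_B}(g(b)\times\{b\}) : e_B\in E_B,\ g:e_B\to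 E_A\}$; then $H_A\otimes H_B=(V_A\times V_B,\ E_{A\to B}\cup E_{A\gets B})$. Bipartite game: for $B_1=(V_1,E_1)$, $B_2=(V_2,E_2)$ with pairwise disjoint edges covering their vertex sets and $H=(V,E)=B_1\otimes B_2$, edges of the form $e_1\times e_2$ ($e_i\in E_i$) are questions, $Q_E$ is the set of questions; a rule is $r:Q_E\to\mathcal{P}(V)$ with $r(e)\subseteq e$; with $W_r=\bigcup_{e\in Q_E}r(e)$, the game on $H$ under $r$ is $H_r=(W_r,\{e\cap W_r:e\in E\})$. *)

From HB Require Import structures.
From mathcomp Require Import all_boot all_order all_algebra.
From mathcomp Require Import Rstruct.
Set Implicit Arguments. Unset Strict Implicit. Unset Printing Implicit Defensive.
Import Order.TTheory GRing.Theory Num.Theory.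
Local Open Scope ring_scope.

(* A hypergraph (contextuality scenario) is a finite type V together with a
   set of edges E : {set {set V}}; the covering condition V = \bigcup E is
   imposed separately as [cover E = [set: V]]. *)

Definition prob_model (R : numDomainType) (V : finType) (E : {set {set V}})
  (p : V -> R) : Prop :=
  (forall v, 0 <= p v <= 1) /\ (forall e, e \in E -> \sum_(v in e) p v = 1).

Definition cond_scenario (R : numDomainType) (V' : finType) (E' : {set {set V'}})
  (V : finType) (E : {set {set V}}) : Prop :=
  exists phi : V' -> V,
    injective phi /\
    (forall p : V -> R, prob_model E p -> prob_model E' (fun v => p (phi v))) /\
    (forall p' : V' -> R, prob_model E' p' ->
       exists p : V -> R, prob_model E p /\ forall v, p (phi v) = p' v).

Definition hconnected (V : finType) (E : {set {set V}}) : Prop :=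
  forall x y : V,
    connect (fun a b => [exists e in E, (a \in e) && (b \in e)]) x y.

Definition disjoint_cover (V : finType) (E : {set {set V}}) : Prop :=
  trivIset E /\ cover E = [set: V].

Definition FR_edges_AB (VA VB : finType) (EA : {set {set VA}}) (EB : {set {set VB}})
  : {set {set VA * VB}} :=
  [set F : {set VA * VB} | [exists eA in EA, exists f : {ffun VA -> {set VB}},
      [forall a in eA, f a \in EB] &&
      (F == \bigcup_(a in eA) setX [set a] (f a))]].

Definition FR_edges_BA (VA VB : finType) (EA : {set {set VA}}) (EB : {set {set VB}})
  : {set {set VA * VB}} :=
  [set F : {set VA * VB} | [exists eB in EB, exists g : {ffun VB -> {set VA}},
      [forall b in eB, g b \in EA] &&
      (F == \bigcup_(b in eB) setX (g b) [set b])]].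

Definition FR_product (VA VB : finType) (EA : {set {set VA}}) (EB : {set {set VB}})
  : {set {set VA * VB}} :=
  FR_edges_AB EA EB :|: FR_edges_BA EA EB.

Definition questions (V1 V2 : finType) (E1 : {set {set V1}}) (E2 : {set {set V2}})
  : {set {set V1 * V2}} :=
  [set setX e1 e2 | e1 in E1, e2 in E2].

Definition is_rule (V1 V2 : finType) (E1 : {set {set V1}}) (E2 : {set {set V2}})
  (r : {set V1 * V2} -> {set V1 * V2}) : Prop :=
  forall e, e \in questions E1 E2 -> r e \subset e.

Definition game_verts (V1 V2 : finType) (E1 : {set {set V1}}) (E2 : {set {set V2}})
  (r : {set V1 * V2} -> {set V1 * V2}) : {set V1 * V2} :=
  \bigcup_(e in questions E1 E2) r e.

Definition subvert (T : finType) (W : {set T}) : finType := {x : T | x \in W}.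

Definition induced_edges (T : finType) (E : {set {set T}}) (W : {set T})
  : {set {set subvert W}} :=
  [set [set x : subvert W | val x \in e] | e : {set T} in E].

Definition game_edges (V1 V2 : finType) (E1 : {set {set V1}}) (E2 : {set {set V2}})
  (r : {set V1 * V2} -> {set V1 * V2}) :=
  induced_edges (FR_product E1 E2) (game_verts E1 E2 r).

(* Across an edge {u, w} of size two every model satisfies p w = 1 - p u, so on
   a connected scenario a model is determined by its value at one vertex.  If
   the scenario has a proper 2-colouring c, its models are p = t on the colour
   class false and 1 - t on the class true, for t in [0, 1]; these are exactly
   the models of the XOR game in which Alice is asked a vertex and Bob, asked a
   dummy question, must repeat her answer, v corresponding to Alice answering
   c v to v.  Otherwise a model taking a value other than 1/2 would be
   2-coloured by [p v < 1/2], so the constant 1/2 is the only model; adding a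
   CHSH square (one extra Alice question, two Bob questions) to the XOR game
   forces 1/2 on the vertex where Alice is asked v, Bob is asked false and both
   answer false.  Both games have O(|V|) vertices. *)

From mathcomp Require Import all_boot all_order all_algebra.
From mathcomp Require Import Rstruct lra zify.
From Stdlib Require Import Classical.
Set Implicit Arguments. Unset Strict Implicit. Unset Printing Implicit Defensive.
Import Order.TTheory GRing.Theory Num.Theory.
Local Open Scope ring_scope.

Definition measurement (T O : finType) (x : T) : {set T * O} := [set z | z.1 == x].
Definition measurements (T O : finType) : {set {set T * O}} :=
  [set measurement O x | x : T].

Lemma measurements_disjoint_cover (T O : finType) :
  disjoint_cover (measurements T O).
Proof.
split.
  apply/trivIsetP => _ _ /imsetP[x _ ->] /imsetP[y _ ->] xy.
  rewrite -setI_eq0; apply/eqP/setP => z; rewrite !inE.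
  by apply/negP => /andP[/eqP zx /eqP zy]; rewrite -zx -zy eqxx in xy.
apply/setP => z; rewrite inE; apply/bigcupP.
by exists (measurement O z.1); rewrite ?imset_f ?inE.
Qed.

Lemma in_bigcup_set1X (A B : finType) (S : {set A}) (h : A -> {set B}) z :
  (z \in \bigcup_(a in S) setX [set a] (h a)) = (z.1 \in S) && (z.2 \in h z.1).
Proof.
apply/bigcupP/andP => [[a aS]|[zS zh]]; last by exists z.1; rewrite ?inE ?eqxx.
by rewrite !inE => /andP[/eqP-> ->].
Qed.

Lemma in_bigcup_setX1 (A B : finType) (S : {set B}) (h : B -> {set A}) z :
  (z \in \bigcup_(b in S) setX (h b) [set b]) = (z.2 \in S) && (z.1 \in h z.2).
Proof.
apply/bigcupP/andP => [[b bS]|[zS zh]]; last by exists z.2; rewrite ?inE ?eqxx ?andbT.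
by rewrite !inE => /andP[zh /eqP zb]; rewrite zb bS.
Qed.

Lemma measurements_inv (T O : finType) (B : {set T * O}) :
  B \in measurements T O -> exists x, B = measurement O x.
Proof. by case/imsetP => x _ ->; exists x. Qed.

Section FoulisRandallMeasurements.
Variables (X Y A B : finType).
Local Notation EX := (measurements X A).
Local Notation EY := (measurements Y B).

Lemma FR_edges_AB_measurements F :
  F \in FR_edges_AB EX EY <->
  exists x (f : A -> Y), F = [set z | (z.1.1 == x) && (z.2.1 == f z.1.2)].
Proof.
split.
  rewrite inE => /exists_inP[_ /imsetP[x _ ->]].
  case/existsP => h /andP[/forall_inP hEY /eqP->].
  have /fin_all_exists[f hf] a : exists y, h (x, a) = measurement B y.
    by apply: measurements_inv; apply: hEY; rewrite inE.
  exists x, f; apply/setP => -[[x' a] [y b]].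
  by rewrite in_bigcup_set1X !inE /=; case: eqP => [->|]; rewrite ?hf ?inE.
case=> x [f ->]; rewrite inE; apply/exists_inP; exists (measurement A x).
  exact: imset_f.
apply/existsP; exists [ffun z => measurement B (f z.2)]; apply/andP; split.
  by apply/forall_inP => z _; rewrite ffunE imset_f.
by apply/eqP/setP => z; rewrite in_bigcup_set1X ffunE !inE.
Qed.

Lemma FR_edges_BA_measurements F :
  F \in FR_edges_BA EX EY <->
  exists y (g : B -> X), F = [set z | (z.2.1 == y) && (z.1.1 == g z.2.2)].
Proof.
split.
  rewrite inE => /exists_inP[_ /imsetP[y _ ->]].
  case/existsP => h /andP[/forall_inP hEX /eqP->].
  have /fin_all_exists[g hg] b : exists x, h (y, b) = measurement A x.
    by apply: measurements_inv; apply: hEX; rewrite inE.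
  exists y, g; apply/setP => -[[x a] [y' b]].
  by rewrite in_bigcup_setX1 !inE /=; case: eqP => [->|]; rewrite ?hg ?inE.
case=> y [g ->]; rewrite inE; apply/exists_inP; exists (measurement B y).
  exact: imset_f.
apply/existsP; exists [ffun z => measurement A (g z.2)]; apply/andP; split.
  by apply/forall_inP => z _; rewrite ffunE imset_f.
by apply/eqP/setP => z; rewrite in_bigcup_setX1 ffunE !inE.
Qed.

End FoulisRandallMeasurements.

Section XorGame.
Variables (X Y : finType) (s : X -> Y -> bool).
Local Notation EX := (measurements X bool).
Local Notation EY := (measurements Y bool).

Definition xor_rule (e : {set (X * bool) * (Y * bool)}) :=
  [set z in e | z.2.2 == z.1.2 (+) s z.1.1 z.2.1].
Definition xor_verts := game_verts EX EY xor_rule.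
Definition xor_game := game_edges EX EY xor_rule.

Lemma xor_rule_is_rule : is_rule EX EY xor_rule.
Proof. by move=> e _; apply/subsetP => z; rewrite inE => /andP[]. Qed.

Lemma mem_xor_verts z : (z \in xor_verts) = (z.2.2 == z.1.2 (+) s z.1.1 z.2.1).
Proof.
apply/bigcupP/idP => [[e _]|zW]; first by rewrite inE => /andP[].
exists (setX (measurement bool z.1.1) (measurement bool z.2.1)).
  by apply/imset2P; exists (measurement bool z.1.1) (measurement bool z.2.1);
    rewrite ?imset_f.
by rewrite !inE !eqxx.
Qed.

Lemma card_xor_verts : (#|xor_verts| <= 4 * #|X| * #|Y|)%N.
Proof. by apply: leq_trans (max_card _) _; rewrite !card_prod card_bool; lia. Qed.

Fact avert_key x a y : ((x, a), (y, a (+) s x y)) \in xor_verts.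
Proof. by rewrite mem_xor_verts. Qed.

Definition avert x a y : subvert xor_verts :=
  exist (fun z => z \in xor_verts) _ (avert_key x a y).
Definition bvert x y b : subvert xor_verts := avert x (b (+) s x y) y.

Definition alice_context x (f : bool -> Y) : {set subvert xor_verts} :=
  [set w | ((val w).1.1 == x) && ((val w).2.1 == f (val w).1.2)].
Definition bob_context y (g : bool -> X) : {set subvert xor_verts} :=
  [set w | ((val w).2.1 == y) && ((val w).1.1 == g (val w).2.2)].

Lemma alice_contextE x f : alice_context x f = [set avert x a (f a) | a : bool].
Proof.
apply/setP => w; apply/idP/imsetP => [|[a _ ->]]; last by rewrite inE /= !eqxx.
case: w => [[[x' a] [y b]] /= wW]; rewrite inE /= => /andP[/eqP xx' /eqP yf].
subst x' y; exists a => //; apply: val_inj => /=.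
by move: wW; rewrite mem_xor_verts /= => /eqP->.
Qed.

Lemma bob_contextE y g : bob_context y g = [set bvert (g b) y b | b : bool].
Proof.
apply/setP => w; apply/idP/imsetP => [|[b _ ->]]; last by rewrite inE /= addbK !eqxx.
case: w => [[[x a] [y' b]] /= wW]; rewrite inE /= => /andP[/eqP yy' /eqP xg].
subst x y'; exists b => //; apply: val_inj => /=.
have -> : a = b (+) s (g b) y.
  by move: wW; rewrite mem_xor_verts /= => /eqP{1}->; rewrite addbK.
by rewrite addbK.
Qed.

Lemma xor_game_edgeP F :
  F \in xor_game <->
  (exists x f, F = alice_context x f) \/ (exists y g, F = bob_context y g).
Proof.
split.
  case/imsetP => F0; rewrite inE => /orP[].
    by case/FR_edges_AB_measurements => x [f ->] ->; left; exists x, f;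
      apply/setP => w; rewrite !inE.
  by case/FR_edges_BA_measurements => y [g ->] ->; right; exists y, g;
    apply/setP => w; rewrite !inE.
case=> [[x [f ->]]|[y [g ->]]]; apply/imsetP.
  exists [set z | (z.1.1 == x) && (z.2.1 == f z.1.2)].
    by rewrite inE; apply/orP; left; apply/FR_edges_AB_measurements; exists x, f.
  by apply/setP => w; rewrite !inE.
exists [set z | (z.2.1 == y) && (z.1.1 == g z.2.2)].
  by rewrite inE; apply/orP; right; apply/FR_edges_BA_measurements; exists y, g.
by apply/setP => w; rewrite !inE.
Qed.

Section Models.
Variable R : numDomainType.
Implicit Type p : subvert xor_verts -> R.

Lemma sum_alice_context p x f :
  \sum_(w in alice_context x f) p w = \sum_a p (avert x a (f a)).
Proof.
by rewrite alice_contextE big_imset // => a a' _ _ /(congr1 (fun w => (val w).1.2)).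
Qed.

Lemma sum_bob_context p y g :
  \sum_(w in bob_context y g) p w = \sum_b p (bvert (g b) y b).
Proof.
rewrite bob_contextE big_imset // => b b' _ _ /(congr1 (fun w => (val w).2.2)) /=.
by rewrite !addbK.
Qed.

Lemma xor_game_modelP p :
  prob_model xor_game p <->
  [/\ forall w, 0 <= p w <= 1,
      forall x f, \sum_a p (avert x a (f a)) = 1
    & forall y g, \sum_b p (bvert (g b) y b) = 1].
Proof.
split=> [[p01 pE]|[p01 alice bob]].
  split=> [//|x f|y g]; [rewrite -sum_alice_context | rewrite -sum_bob_context];
    apply/pE/xor_game_edgeP; [by left; exists x, f | by right; exists y, g].
split=> // F /xor_game_edgeP[[x [f ->]]|[y [g ->]]].
  by rewrite sum_alice_context.
by rewrite sum_bob_context.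
Qed.

End Models.

Lemma xor_game_half (R : realFieldType) : prob_model xor_game (fun=> 2^-1 : R).
Proof.
apply/xor_game_modelP; split=> [w|x f|y g]; rewrite ?big_bool /=; [|lra..].
by apply/andP; split; lra.
Qed.

End XorGame.

Definition chsh_sign (X : Type) (x : option X) (y : bool) : bool :=
  if x is Some _ then false else y.

Lemma chsh_forces_half (R : realFieldType) (X : finType)
    (p : subvert (xor_verts (@chsh_sign X)) -> R) :
  prob_model (xor_game (@chsh_sign X)) p ->
  forall x, p (avert (@chsh_sign X) (Some x) false false) = 2^-1.
Proof.
case/xor_game_modelP => _ alice bob x.
(* The CHSH square on the questions Some x, None and false, true. *)
have := alice (Some x) id; have := alice None id; have := alice None (fun=> false).
have := bob false (fun b => if b then None else Some x).
have := bob true (fun b => if b then Some x else None).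
rewrite !big_bool /bvert /=; lra.
Qed.

Definition two_colouring (V : finType) (E : {set {set V}}) (c : V -> bool) :=
  forall e, e \in E -> {in e &, forall u w, u != w -> c u != c w}.

Lemma hconnected_const (V : finType) (E : {set {set V}}) (T : Type) (f : V -> T) :
  hconnected E ->
  (forall e, e \in E -> {in e &, forall u w, u != w -> f u = f w}) ->
  forall u w, f u = f w.
Proof.
move=> connE fE u w; have /connectP[pth] := connE u w.
elim: pth u => [_ _ ->|v pth IH] //= u /andP[/exists_inP[e eE /andP[ue ve]] pth_v].
move=> wl; rewrite -(IH v pth_v wl).
by case: (eqVneq u v) => [->|uv] //; apply: fE e eE u v ue ve uv.
Qed.

Section BinaryScenario.
Variables (R : realFieldType) (V : finType) (E : {set {set V}}).
Hypotheses (connE : hconnected E) (binE : forall e, e \in E -> #|e| = 2%N).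
Implicit Type p : V -> R.

Lemma binary_prob_modelP p :
  prob_model E p <->
  (forall v, 0 <= p v <= 1) /\
  (forall e, e \in E -> {in e &, forall u w, u != w -> p u + p w = 1}).
Proof.
have edgeE e : e \in E -> exists u w, u != w /\ e = [set u; w].
  by move=> eE; apply/cards2P; rewrite binE.
split=> -[p01 pE]; split=> // e eE.
  move=> u w ue we uw; rewrite -(pE e eE).
  have [u' [w' [uw' eE']]] := edgeE e eE; move: ue we uw; rewrite eE' !inE.
  rewrite big_setU1 ?big_set1 ?inE //=.
  by case/orP=> /eqP-> /orP[]/eqP->; rewrite ?eqxx // addrC.
have [u [w [uw eE']]] := edgeE e eE.
rewrite eE' big_setU1 ?big_set1 ?inE //.
by apply: (pE e) => //; rewrite eE' !inE eqxx ?orbT.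
Qed.

Lemma colouring_model c p :
  two_colouring E c -> prob_model E p ->
  exists2 t, 0 <= t <= 1 & forall v, p v = if c v then 1 - t else t.
Proof.
move=> colE /binary_prob_modelP[p01 pE].
have flip_const u w : (if c u then 1 - p u else p u) = (if c w then 1 - p w else p w).
  apply: (hconnected_const (f := fun v => if c v then 1 - p v else p v)) connE _ u w.
  move=> e eE u' w' ue we uw; have := pE e eE u' w' ue we uw.
  by have := colE e eE u' w' ue we uw; case: (c u'); case: (c w') => //= _; lra.
case: (pickP (fun _ : V => true)) => [v0 _|noV].
  2: by exists 0 => [|v]; [rewrite lexx ler01 | have := noV v].
exists (if c v0 then 1 - p v0 else p v0).
  by case/andP: (p01 v0) => ? ?; case: (c v0); apply/andP; split; lra.
by move=> v; rewrite -(flip_const v v0); case: (c v); lra.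
Qed.

Lemma model_colouring p v0 :
  prob_model E p -> p v0 != 2^-1 -> two_colouring E (fun v => p v < 2^-1).
Proof.
move=> /binary_prob_modelP[_ pE] pv0.
have half_const u w : (p u == 2^-1) = (p w == 2^-1).
  apply: (hconnected_const (f := fun v => p v == 2^-1)) connE _ u w.
  move=> e eE u' w' ue we uw; have := pE e eE u' w' ue we uw.
  by move=> sum_uw; apply/eqP/eqP => ?; lra.
move=> e eE u w ue we uw; have := pE e eE u w ue we uw.
have := half_const u v0; rewrite (negbTE pv0) => /negbT pu sum_uw.
rewrite (_ : p w = 1 - p u); last by lra.
have [lt_u|gt_u|eq_u] := ltgtP (p u) 2^-1; last by rewrite eq_u eqxx in pu.
  by rewrite eq_sym eqb_id; apply/negP => ?; lra.
by rewrite eq_sym eqbF_neg negbK; lra.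
Qed.

Lemma nonbipartite_models_half p :
  ~ (exists c, two_colouring E c) -> prob_model E p -> forall v, p v = 2^-1.
Proof.
move=> nocol pm v; apply/eqP/negPn/negP => pv; apply: nocol.
by exists (fun v => p v < 2^-1); apply: model_colouring pm pv.
Qed.

Lemma bipartite_cond_scenario c :
  two_colouring E c ->
  cond_scenario R E (xor_game (fun (_ : V) (_ : unit) => false)).
Proof.
move=> colE; exists (fun v => avert _ v (c v) tt); split.
  by move=> u w /(congr1 (fun z => (val z).1.1)).
split=> [p /xor_game_modelP[p01 _ bob] | p' /(colouring_model colE)[t t01 p'E]].
  apply/binary_prob_modelP; split=> // e eE u w ue we uw.
  have := bob tt (fun b => if b then u else w).
  have := bob tt (fun b => if b then w else u).
  rewrite !big_bool /bvert /=.
  by have := colE e eE u w ue we uw; case: (c u); case: (c w) => //= _; lra.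
exists (fun w => if (val w).1.2 then 1 - t else t); split=> [|v]; last by rewrite p'E.
case/andP: t01 => t0 t1; apply/xor_game_modelP.
split=> [w|x f|y g]; rewrite ?big_bool /bvert /=; [|lra..].
by case: ifP => _; apply/andP; split; lra.
Qed.

Lemma nonbipartite_cond_scenario :
  ~ (exists c, two_colouring E c) -> cond_scenario R E (xor_game (@chsh_sign V)).
Proof.
move=> nocol; exists (fun v => avert _ (Some v) false false); split.
  by move=> u w /(congr1 (fun z => (val z).1.1)) [].
split=> [p /chsh_forces_half half | p' p'E].
  apply/binary_prob_modelP; split=> [v|e _ u w _ _ _]; rewrite !half.
    by apply/andP; split; lra.
  by lra.
exists (fun=> 2^-1); split=> [|v]; first exact: xor_game_half.
by rewrite (nonbipartite_models_half nocol p'E).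
Qed.

End BinaryScenario.

Local Close Scope ring_scope.

Lemma xor_game_interpretation (R : numDomainType) (V X Y : finType)
    (E : {set {set V}}) (s : X -> Y -> bool) (n : nat) :
  4 * #|X| * #|Y| <= n -> cond_scenario R E (xor_game s) ->
  exists (V1 V2 : finType) (E1 : {set {set V1}}) (E2 : {set {set V2}})
         (r : {set V1 * V2} -> {set V1 * V2}),
    disjoint_cover E1 /\ disjoint_cover E2 /\ is_rule E1 E2 r /\
    #|game_verts E1 E2 r| <= n /\ cond_scenario R E (game_edges E1 E2 r).
Proof.
move=> size_n interp; exists _, _, (measurements X bool), (measurements Y bool).
exists (xor_rule s); split; first exact: measurements_disjoint_cover.
split; first exact: measurements_disjoint_cover.
split; first exact: xor_rule_is_rule.
by split; first exact: leq_trans (card_xor_verts s) size_n.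
Qed.

Theorem theorem4p2 :
  exists C : nat,
  forall (V : finType) (E : {set {set V}}),
    cover E = [set: V] ->
    hconnected E ->
    (forall e, e \in E -> #|e| = 2) ->
    exists (V1 V2 : finType) (E1 : {set {set V1}}) (E2 : {set {set V2}})
           (r : {set V1 * V2} -> {set V1 * V2}),
      disjoint_cover E1 /\ disjoint_cover E2 /\ is_rule E1 E2 r /\
      #|game_verts E1 E2 r| <= C * #|V| /\
      @cond_scenario Rdefinitions.R _ E _ (game_edges E1 E2 r).
Proof.
exists 16 => V E _ connE binE.
have [[c colE]|nocol] := classic (exists c, two_colouring E c).
  apply: xor_game_interpretation (bipartite_cond_scenario _ connE binE colE).
  by rewrite card_unit; lia.
apply: xor_game_interpretation (nonbipartite_cond_scenario _ connE binE nocol).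
have V_gt0 : 0 < #|V|.
  case: (posnP #|V|) => // /card0_eq V0; case: nocol; exists xpred0 => e _ u.
  by have := V0 u; rewrite !inE.
by rewrite card_option card_bool; lia.
Qed.
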